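(* Let $a,b\ge1$, $P=[a]\times[b]$, $n=a+b$. For every $f\in(\mathbb R^+)^P$ and every $1\le k\le n-1$, $$Q(\tau^*_k f)=\sigma_k\,Q(f),$$ i.e. applying the birational toggles of the $k$-th file swaps the $k$-th and $(k+1)$-st entries of the quotient sequence and leaves the others unchanged.
   Context: $[a]\times[b]=\{(i,j)\in\mathbb Z^2:1\le i\le a,\ 1\le j\le b\}$ with the product order. Let $\widehat P=P\cup\{\hat0,\hat1\}$ with $\hat0<x<\hat1$ for all $x\in P$; write $y\lessdot x$ for covering relations; $x^+=\{y\in\widehat P:y\gtrdot x\}$, $x^-=\{y\in\widehat P:y\lessdot x\}$. Each $f:P\to\mathbb R^+$ is extended by $\hat f(\hat0)=\hat f(\hat1)=1$. Parallel sum: $s_1\parallel\cdots\parallel s_m=(1/s_1+\cdots+1/s_m)^{-1}$. The birational toggle $\tau_x$ changes only the value at $x$: $(\tau_xf)(x)=\frac{1}{f(x)}\bigl(\sum_{y\in x^-}\hat f(y)\bigr)\bigl(\|_{y\in x^+}\hat f(y)\bigr)$. The $k$-th file ($1\le k\le n-1$) is $\{(i,j)\in P:j-i+a=k\}$; $\tau^*_k$ is the composition of the (commuting) toggles $\tau_x$ over $x$ in file $k$. For $f\in(\mathbb R^+)^P$ let $p_k=\prod_{x\in\text{file }k}f(x)$ for $1\le k\le n-1$, $p_0=p_n=1$, $q_k=p_k/p_{k-1}$ for $1\le k\le n$; the quotient sequence is $Q(f)=(q_1,\dots,q_n)$. For $w=(w_1,\dots,w_n)$, $\sigma_k(w)=(w_1,\dots,w_{k-1},w_{k+1},w_k,w_{k+2},\dots,w_n)$.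 *)

From HB Require Import structures.
From mathcomp Require Import all_boot all_order all_algebra.
Set Implicit Arguments. Unset Strict Implicit. Unset Printing Implicit Defensive.
Import Order.TTheory GRing.Theory Num.Theory.
Local Open Scope ring_scope.

Section Toggle.
Variables (R : realFieldType) (a b : nat).

(* The poset P = [a] x [b]: the element (i,j) (1-based) is represented by
   the pair of ordinals (i-1, j-1) : 'I_a * 'I_b. *)
Definition elt := ('I_a * 'I_b)%type.

Definition leP (x y : elt) : bool := ((x.1 <= y.1)%N && (x.2 <= y.2)%N).

(* hat P = P u {0hat, 1hat}:  inl false = 0hat, inl true = 1hat, inr x = x. *)
Definition Phat := (bool + elt)%type.
Definition bot : Phat := inl false.
Definition top : Phat := inl true.

Definition leh (x y : Phat) : bool :=
  match x, y with
  | inl false, _ => true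
  | _, inl true => true
  | inr p, inr q => leP p q
  | _, _ => false
  end.
Definition lth (x y : Phat) : bool := (x != y) && leh x y.

Definition covh (y x : Phat) : bool :=
  lth y x && [forall z : Phat, ~~ (lth y z && lth z x)].

Definition fhat (f : elt -> R) (x : Phat) : R :=
  match x with inl _ => 1 | inr p => f p end.

Definition toggle (x : elt) (f : elt -> R) : elt -> R :=
  fun y => if y == x then
    (f x)^-1 * (\sum_(z : Phat | covh z (inr x)) fhat f z)
             * (\sum_(z : Phat | covh (inr x) z) (fhat f z)^-1)^-1
  else f y.

Definition infile (k : nat) (x : elt) : bool := (x.2 + a - x.1 == k)%N.

Definition tau_file (k : nat) (f : elt -> R) : elt -> R :=
  foldr toggle f (enum [pred x | infile k x]).

Definition n := (a + b)%N.

Definition pk (f : elt -> R) (k : nat) : R :=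
  if (0 < k < n)%N then \prod_(x : elt | infile k x) f x else 1.

Definition qk (f : elt -> R) (k : nat) : R := pk f k / pk f k.-1.

Definition Qseq (f : elt -> R) : seq R := [seq qk f k | k <- iota 1 n].

End Toggle.

(* sigma_k swaps the k-th and (k+1)-st entries (1-based) *)
Definition sigma {T : Type} (x0 : T) (k : nat) (w : seq T) : seq T :=
  take k.-1 w ++ [:: nth x0 w k; nth x0 w k.-1] ++ drop k.+1 w.

(* The elements of a file are pairwise incomparable, so the toggles of file k only see the
   original values of f, and for x in file k the toggled value satisfies
     (tau*_k f)(x) * f(x) = (sum of f over the lower covers of x) * (parallel sum over its upper covers).
   Listing file k along the diagonal as x_l < ... < x_h, the upper covers of x_s are exactly the
   lower covers of x_(s+1), and (u + v)(u || v) = u v; hence the product of these quantities over the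
   file telescopes to p_(k-1) p_(k+1).  So p_k(tau*_k f) = p_(k-1) p_(k+1) / p_k and every other p_j is
   unchanged, which exchanges q_k and q_(k+1). *)

From Pilot Require Import Defs.
From HB Require Import structures.
From mathcomp Require Import all_boot all_order all_algebra zify ring.
Import Order.TTheory GRing.Theory Num.Theory.
Set Implicit Arguments. Unset Strict Implicit. Unset Printing Implicit Defensive.
Local Open Scope ring_scope.

Section BigLemmas.
Variables (T : Type) (idx : T) (op : Monoid.com_law idx).

Lemma big_delta n (G : nat -> T) c :
  \big[op/idx]_(i < n) (if i == c :> nat then G i else idx) = if (c < n)%N then G c else idx.
Proof.
case: ltnP => [lt_cn | le_nc].
  rewrite (bigD1 (Ordinal lt_cn)) //= eqxx big1 ?Monoid.mulm1 // => i ne_ic.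
  by rewrite ifF //; apply: contraNF ne_ic => /eqP eq_ic; apply/eqP/val_inj.
by apply: big1 => i _; rewrite ifF //; apply/negbTE; rewrite neq_ltn (leq_trans (ltn_ord i) le_nc).
Qed.

Lemma big_ord_narrow (F : nat -> T) l h N : (l <= h <= N)%N ->
  (forall s, ~~ (l <= s < h)%N -> F s = idx) ->
  \big[op/idx]_(s < N) F s = \big[op/idx]_(l <= s < h) F s.
Proof.
move=> /andP[lh hN] F_out; rewrite -(big_mkord xpredT).
rewrite (big_cat_nat (leq0n l) (leq_trans lh hN)) (big_cat_nat lh hN) /=.
rewrite [X in op X _]big_nat_cond big1 ?Monoid.mul1m; last first.
  by move=> s /andP[/andP[_ lt_sl] _]; rewrite F_out // negb_and -ltnNge lt_sl.
rewrite [X in op _ X]big_nat_cond [X in op _ X]big1 ?Monoid.mulm1 //.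
by move=> s /andP[/andP[le_hs _] _]; rewrite F_out // negb_and -!ltnNge ltnS le_hs orbT.
Qed.

End BigLemmas.

Lemma prod_div_shift (F : fieldType) (D U : nat -> F) l h : (l <= h)%N ->
  \prod_(l <= s < h.+1) (D s / U s) = D l * \prod_(l <= s < h) (D s.+1 / U s) / U h.
Proof.
move=> lh; rewrite !prodf_div big_ltn // big_add1 big_nat_recr //=.
by rewrite invfM !mulrA.
Qed.

Lemma add_div_addV (F : numFieldType) (x y : F) : 0 < x -> 0 < y ->
  (x + y) / (y^-1 + x^-1) = x * y.
Proof.
move=> x_gt0 y_gt0; have [x0 y0] := conj (lt0r_neq0 x_gt0) (lt0r_neq0 y_gt0).
have xy0 : x + y != 0 by rewrite lt0r_neq0 ?addr_gt0.
by field; rewrite x0 y0 xy0.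
Qed.

Section Covers.
Variables a b : nat.
Implicit Types p q : elt a b.

Lemma elt_eqE q p : (q == p) = (q.1 == p.1 :> nat) && (q.2 == p.2 :> nat).
Proof. by case: q p => [q1 q2] [p1 p2]. Qed.

Lemma big_elt (T : Type) (idx : T) (op : Monoid.com_law idx) (F : elt a b -> T) :
  \big[op/idx]_(q : elt a b) F q = \big[op/idx]_(i < a) \big[op/idx]_(j < b) F (i, j).
Proof. by rewrite pair_bigA; apply: eq_bigr => -[]. Qed.

Lemma inr_eqE q p : (inr q == inr p :> Phat a b) = (q == p).
Proof. by []. Qed.

Definition cov q p : bool :=
  ((q.1.+1 == p.1) && (q.2 == p.2 :> nat)) || ((q.1 == p.1 :> nat) && (q.2.+1 == p.2)).

Lemma covh_inr q p : covh (inr q) (inr p) = cov q p.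
Proof.
case: q p => [q1 q2] [p1 p2]; rewrite /covh /lth /= inr_eqE elt_eqE /Defs.leP /cov /=.
have [[? ?] [? ?]] := (conj (ltn_ord q1) (ltn_ord q2), conj (ltn_ord p1) (ltn_ord p2)).
apply/andP/idP => [[lt_qp /forallP between] | cov_qp].
  apply/negPn/negP => not_cov.
  have [lt1|le1] := ltnP q1 p1; have [lt2|le2] := ltnP q2 p2.
  - by have := between (inr (p1, q2)); rewrite /= !inr_eqE !elt_eqE /Defs.leP /=; move: lt_qp not_cov; lia.
  - have q1S : (q1.+1 < a)%N by lia.
    by have := between (inr (Ordinal q1S, q2)); rewrite /= !inr_eqE !elt_eqE /Defs.leP /=; move: lt_qp not_cov; lia.
  - have q2S : (q2.+1 < b)%N by lia.
    by have := between (inr (q1, Ordinal q2S)); rewrite /= !inr_eqE !elt_eqE /Defs.leP /=; move: lt_qp not_cov; lia.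
  - by move: lt_qp; lia.
split; first by move: cov_qp; lia.
apply/forallP => -[[]|[r1 r2]] /=; rewrite ?andbF // !inr_eqE !elt_eqE /Defs.leP /=.
by move: cov_qp; lia.
Qed.

Lemma covh_bot_inr p : covh (bot a b) (inr p) = (p.1 == 0 :> nat) && (p.2 == 0 :> nat).
Proof.
case: p => [p1 p2]; rewrite /covh /lth /=.
have [? ?] := conj (ltn_ord p1) (ltn_ord p2).
apply/forallP/idP => [minimal | /andP[/eqP p10 /eqP p20] [[]|[r1 r2]]] //=.
  apply/negPn/negP => not0.
  have [a0 b0] : (0 < a)%N /\ (0 < b)%N by lia.
  by have := minimal (inr (Ordinal a0, Ordinal b0)); rewrite /= !inr_eqE !elt_eqE /Defs.leP /=; move: not0; lia.
by rewrite !inr_eqE !elt_eqE /Defs.leP /= p10 p20; lia.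
Qed.

Lemma covh_inr_top p : covh (inr p) (top a b) = (p.1.+1 == a) && (p.2.+1 == b).
Proof.
case: p => [p1 p2]; rewrite /covh /lth /=.
have [? ?] := conj (ltn_ord p1) (ltn_ord p2).
apply/forallP/idP => [maximal | top_p [[]|[r1 r2]]] //=; rewrite ?andbF //.
  apply/negPn/negP => not_top.
  have [a1 b1] : (a.-1 < a)%N /\ (b.-1 < b)%N by lia.
  by have := maximal (inr (Ordinal a1, Ordinal b1)); rewrite /= !inr_eqE !elt_eqE /Defs.leP /=; move: not_top; lia.
rewrite !inr_eqE !elt_eqE /Defs.leP /= andbT.
by move: top_p (ltn_ord r1) (ltn_ord r2); lia.
Qed.

End Covers.

Section CoverSums.
Variables (R : realFieldType) (a b : nat) (f : elt a b -> R).

Lemma sum_delta2 (G : nat -> nat -> R) (c : bool) ci cj :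
  \sum_(i < a) \sum_(j < b) (if c && ((i == ci :> nat) && (j == cj :> nat)) then G i j else 0)
  = if [&& c, ci < a & cj < b]%N then G ci cj else 0.
Proof.
case: c => /=; last by rewrite big1 // => i _; rewrite big1.
rewrite (eq_bigr (fun i : 'I_a => if i == ci :> nat then (if (cj < b)%N then G i cj else 0) else 0)).
  by rewrite (big_delta +%R a (fun i => if (cj < b)%N then G i cj else 0)); case: (ci < a)%N.
by move=> i _; case: eqP => _ /=; [exact: big_delta | rewrite big1].
Qed.

Definition fext (i j : nat) : R :=
  if insub i is Some i' then if insub j is Some j' then f (i', j') else 0 else 0.

Lemma fextE (i : 'I_a) (j : 'I_b) : fext i j = f (i, j).
Proof. by rewrite /fext !valK. Qed.

Lemma fext_out i j : ~~ ((i < a) && (j < b))%N -> fext i j = 0.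
Proof.
rewrite negb_and /fext => /orP[out_i | out_j]; first by rewrite insubN.
by case: (insub i) => // ?; rewrite insubN.
Qed.

Definition lower_sum (i j : nat) : R :=
  (if (i == 0) && (j == 0) then 1 else 0)
  + (if (0 < i)%N then fext i.-1 j else 0) + (if (0 < j)%N then fext i j.-1 else 0).

(* Entries outside the grid are 0, so (with 0^-1 = 0) a missing upper cover contributes nothing. *)
Definition upper_sum (i j : nat) : R :=
  (if (i.+1 == a) && (j.+1 == b) then 1 else 0) + (fext i.+1 j)^-1 + (fext i j.+1)^-1.

Lemma if_cov_lower (x : R) (i j p1 p2 : nat) :
  (if ((i.+1 == p1) && (j == p2)) || ((i == p1) && (j.+1 == p2)) then x else 0) =
  (if (0 < p1)%N && ((i == p1.-1) && (j == p2)) then x else 0)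
  + (if (0 < p2)%N && ((i == p1) && (j == p2.-1)) then x else 0).
Proof. by do ![case: ifP => ?]; rewrite ?addr0 ?add0r //; exfalso; lia. Qed.

(* The [true &&] guards give both summands the shape expected by [sum_delta2]. *)
Lemma if_cov_upper (x : R) (i j p1 p2 : nat) :
  (if ((p1.+1 == i) && (p2 == j)) || ((p1 == i) && (p2.+1 == j)) then x else 0) =
  (if true && ((i == p1.+1) && (j == p2)) then x else 0)
  + (if true && ((i == p1) && (j == p2.+1)) then x else 0).
Proof. by do ![case: ifP => ?]; rewrite ?addr0 ?add0r //; exfalso; lia. Qed.

Lemma sum_lower_covers (p : elt a b) :
  \sum_(z : Phat a b | covh z (inr p)) fhat f z = lower_sum p.1 p.2.
Proof.
rewrite big_mkcond big_sumType big_bool /= covh_bot_inr add0r big_elt.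
case: p => [p1 p2] /=.
under eq_bigr => i _ do under eq_bigr => j _ do rewrite covh_inr -fextE /cov /= if_cov_lower.
under eq_bigr => i _ do rewrite big_split /=.
rewrite big_split /= !sum_delta2 /lower_sum -addrA.
have [lt1 lt2] : (p1.-1 < a)%N /\ (p2.-1 < b)%N by move: (ltn_ord p1) (ltn_ord p2); lia.
by rewrite !ltn_ord lt1 lt2 !andbT.
Qed.

Lemma inv_fext_in (i j : nat) : (if ((i < a) && (j < b))%N then (fext i j)^-1 else 0) = (fext i j)^-1.
Proof. by case: ifP => // out; rewrite fext_out ?out // invr0. Qed.

Lemma sum_upper_covers (p : elt a b) :
  \sum_(z : Phat a b | covh (inr p) z) (fhat f z)^-1 = upper_sum p.1 p.2.
Proof.
rewrite big_mkcond big_sumType big_bool /= covh_inr_top invr1 addr0 big_elt.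
case: p => [p1 p2] /=.
under eq_bigr => i _ do under eq_bigr => j _ do
  rewrite covh_inr -fextE /cov /= (if_cov_upper (fext i j)^-1).
under eq_bigr => i _ do rewrite big_split.
rewrite big_split (sum_delta2 (fun i j => (fext i j)^-1)) (sum_delta2 (fun i j => (fext i j)^-1)).
by rewrite /= !inv_fext_in /upper_sum addrA.
Qed.

End CoverSums.

Section FileToggle.
Variables (R : realFieldType) (a b k : nat).
Implicit Types (f : elt a b -> R) (p q : elt a b).

Lemma cov_infile q p : cov q p -> ~~ (infile k q && infile k p).
Proof.
case: q p => [q1 q2] [p1 p2]; rewrite /cov /infile /=.
by move: (ltn_ord q1) (ltn_ord p1); lia.
Qed.

Lemma toggle_eq_covers f g p :
  g p = f p -> (forall q, cov q p || cov p q -> g q = f q) -> toggle p g p = toggle p f p.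
Proof.
move=> gp_fp g_f; rewrite /toggle eqxx gp_fp; congr (_ * _ / _).
  by apply: eq_bigr => -[c|q] //; rewrite covh_inr => qp /=; rewrite g_f ?qp.
by apply: eq_bigr => -[c|q] //; rewrite covh_inr => pq /=; rewrite g_f ?pq ?orbT.
Qed.

Lemma foldr_toggle_file f (s : seq (elt a b)) : uniq s -> all (infile k) s ->
  forall y, foldr (@toggle R a b) f s y = if y \in s then toggle y f y else f y.
Proof.
elim: s => [|x s IH] //= /andP[x_notin_s uniq_s] /andP[kx ks] y.
have IHs := IH uniq_s ks.
have off_file q : ~~ infile k q -> foldr (@toggle R a b) f s q = f q.
  by move=> kq; rewrite IHs; case: ifP => // qs; rewrite (allP ks q qs) in kq.
rewrite inE; case: (eqVneq y x) => [->|yx] /=; last by rewrite {1}/toggle (negbTE yx) IHs.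
apply: toggle_eq_covers => [|q cov_q]; first by rewrite IHs (negbTE x_notin_s).
apply: off_file; apply: contraTN isT => kq.
by case/orP: cov_q => /cov_infile; rewrite kq kx.
Qed.

Lemma tau_fileE f y : tau_file k f y = if infile k y then toggle y f y else f y.
Proof.
rewrite /tau_file foldr_toggle_file ?enum_uniq ?mem_enum ?inE //.
by apply/allP => x; rewrite mem_enum.
Qed.

Lemma toggle_mul_self f p : f p != 0 ->
  toggle p f p * f p = lower_sum f p.1 p.2 / upper_sum f p.1 p.2.
Proof.
move=> fp0; rewrite /toggle eqxx sum_lower_covers sum_upper_covers.
by rewrite mulrC !mulrA mulfV ?mul1r.
Qed.

End FileToggle.

Section Diagonals.
Variables (R : realFieldType) (a b : nat).

(* The element of file k on the diagonal s is the 0-based pair (s - k, s - a); [diag g k s] is the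
   value of g there, or 1 if file k does not meet that diagonal. *)
Definition on_diag k s : bool := [&& k <= s, a <= s, s - k < a & s - a < b]%N.

Definition diag (g : nat -> nat -> R) k s : R := if on_diag k s then g (s - k)%N (s - a)%N else 1.

Lemma prod_file_diag (g : nat -> nat -> R) k N : (k + a <= N)%N ->
  \prod_(x : elt a b | infile k x) g x.1 x.2 = \prod_(s < N) diag g k s.
Proof.
move=> le_kaN; rewrite (big_ord_narrow _ _ (l := k) (h := k + a)) ?leq_addr ?le_kaN //; last first.
  by move=> s; rewrite /diag /on_diag; case: ifP => //; lia.
rewrite -{2}(add0n k) big_addn addKn big_mkord big_mkcond big_elt.
apply: eq_bigr => i _; have lt_ia := ltn_ord i.
rewrite (eq_bigr (fun j : 'I_b =>
    if (a <= i + k)%N then (if j == (i + k - a)%N :> nat then g i j else 1) else 1)); last first.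
  by move=> j _; rewrite /infile /=; have := ltn_ord j; do ![case: ifP => ?] => //; lia.
rewrite /diag /on_diag addnK; case: (leqP a (i + k)) => [le_a_ik | lt_ik_a].
  by rewrite big_delta; do ![case: ifP => ?] => //; lia.
by rewrite big1 //; case: ifP => //; lia.
Qed.

Lemma pk_diag (f : elt a b -> R) j : (j <= n a b)%N ->
  pk f j = \prod_(s < a + n a b) diag (fext f) j s.
Proof.
rewrite /pk /n => le_jn; case: ifP => [j_in | j_out].
  rewrite -(prod_file_diag (fext f) (N := a + (a + b))); last lia.
  by apply: eq_bigr => -[x1 x2] _; rewrite fextE.
by rewrite big1 // => s _; rewrite /diag /on_diag; case: ifP => //; lia.
Qed.

Lemma prod_file_range (g : nat -> nat -> R) k : (k < a + b)%N ->
  \prod_(x : elt a b | infile k x) g x.1 x.2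
  = \prod_(maxn k a <= s < minn (k + a) (a + b)) g (s - k)%N (s - a)%N.
Proof.
move=> lt_k_ab; rewrite (prod_file_diag g (N := k + a)) //.
rewrite (big_ord_narrow _ _ (l := maxn k a) (h := minn (k + a) (a + b))); last 2 first.
- by apply/andP; split; lia.
- by move=> s; rewrite /diag /on_diag; case: ifP => //; lia.
by apply: eq_big_nat => s s_in; rewrite /diag /on_diag ifT //; lia.
Qed.

Lemma pk_range (f : elt a b -> R) j lo hi : (j <= n a b)%N -> (lo <= hi)%N ->
  (lo <= maxn j a)%N -> (minn (j + a) (a + b) <= hi <= a + (a + b))%N ->
  pk f j = \prod_(lo <= s < hi) diag (fext f) j s.
Proof.
move=> le_jn lo_hi lo_le hi_ge; rewrite pk_diag // /n.
apply: big_ord_narrow => [|s]; first by lia.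
by rewrite /diag /on_diag; case: ifP => //; lia.
Qed.

Lemma diag_fext_gt0 (f : elt a b -> R) j s : (forall x, 0 < f x) -> 0 < diag (fext f) j s.
Proof.
move=> f_gt0; rewrite /diag /on_diag /fext; case: ifP => // /and4P[_ _ lt_a lt_b].
by rewrite !insubT.
Qed.

End Diagonals.

Section FileProduct.
Variables (R : realFieldType) (a b : nat) (f : elt a b -> R) (k : nat).

Local Notation D s := (lower_sum f (s - k)%N (s - a)%N).
Local Notation U s := (upper_sum f (s - k)%N (s - a)%N).
Local Notation up s := (diag a b (fext f) k.+1 s).
Local Notation dn s := (diag a b (fext f) k.-1 s).

Lemma lower_first s : (0 < k)%N -> s = maxn k a -> (s < minn (k + a) (a + b))%N ->
  D s = up s * dn s.-1.
Proof.
rewrite /lower_sum /diag /on_diag => k_gt0 s_first s_in.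
do ![case: ifP => ?]; rewrite ?add0r ?addr0 ?mulr1 ?mul1r; try (exfalso; lia).
all: by [|congr (fext f _ _); lia].
Qed.

Lemma lower_mid s : (maxn k a < s < minn (k + a) (a + b))%N -> D s = up s + dn s.-1.
Proof.
rewrite /lower_sum /diag /on_diag => s_in.
do ![case: ifP => ?]; rewrite ?add0r ?addr0; try (exfalso; lia).
by congr (_ + _); congr (fext f _ _); lia.
Qed.

Lemma upper_mid s : (0 < k)%N -> (maxn k a <= s)%N -> (s.+1 < minn (k + a) (a + b))%N ->
  U s = (dn s)^-1 + (up s.+1)^-1.
Proof.
rewrite /upper_sum /diag /on_diag => k_gt0 s_ge s_lt.
do ![case: ifP => ?]; rewrite ?add0r ?addr0; try (exfalso; lia).
by congr (_^-1 + _^-1); congr (fext f _ _); lia.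
Qed.

Lemma upper_last s : (0 < k)%N -> s.+1 = minn (k + a) (a + b) -> (maxn k a <= s)%N ->
  U s = (dn s * up s.+1)^-1.
Proof.
rewrite /upper_sum /diag /on_diag => k_gt0 s_last s_ge.
do ![case: ifP => ?]; rewrite ?add0r ?addr0 ?mulr1 ?mul1r; try (exfalso; lia).
all: try by congr (fext f _ _)^-1; lia.
- by rewrite !fext_out ?invr0 ?addr0 ?invr1 //; lia.
- by rewrite [fext f (s - k) _]fext_out ?invr0 ?addr0; [congr (fext f _ _)^-1 |]; lia.
- by rewrite [fext f (s - k).+1 _]fext_out ?invr0 ?add0r; [congr (fext f _ _)^-1 |]; lia.
Qed.

Lemma pk_tau_file_mul : (0 < a)%N -> (0 < b)%N -> (0 < k < n a b)%N ->
  (forall x, 0 < f x) -> pk (tau_file k f) k * pk f k = pk f k.-1 * pk f k.+1.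
Proof.
rewrite /n => a_gt0 b_gt0 /andP[k_gt0 lt_kn] f_gt0.
have [l [h [l_def h_def]]] : exists l h, l = maxn k a /\ h.+1 = minn (k + a) (a + b).
  by exists (maxn k a), (minn (k + a) (a + b)).-1; lia.
have [l_gt0 lh] : (0 < l)%N /\ (l <= h)%N by lia.
have file_k : pk (tau_file k f) k * pk f k = \prod_(l <= s < h.+1) (D s / U s).
  rewrite /pk k_gt0 lt_kn -big_split /=.
  rewrite (eq_bigr (fun x : elt a b => lower_sum f x.1 x.2 / upper_sum f x.1 x.2)) => [|x kx].
    by rewrite (prod_file_range (fun i j => lower_sum f i j / upper_sum f i j)) // l_def h_def.
  by rewrite tau_fileE kx toggle_mul_self ?lt0r_neq0.
have file_up : pk f k.+1 = \prod_(l <= s < h.+2) up s by apply: pk_range; rewrite /n; lia.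
have file_dn : pk f k.-1 = \prod_(l.-1 <= s < h.+1) dn s by apply: pk_range; rewrite /n; lia.
have pos j s : 0 < diag a b (fext f) j s := diag_fext_gt0 j s f_gt0.
have D_first : D l = up l * dn l.-1 by apply: lower_first => //; lia.
have U_last : U h = (dn h * up h.+1)^-1 by apply: upper_last => //; lia.
(* the upper covers of x_s are the lower covers of x_(s+1) *)
have diamonds : \prod_(l <= s < h) (D s.+1 / U s) = \prod_(l <= s < h) (up s.+1 * dn s).
  by apply: eq_big_nat => s s_in; rewrite lower_mid ?upper_mid ?add_div_addV //; lia.
rewrite file_k file_up file_dn prod_div_shift // D_first U_last diamonds.
have up_split : \prod_(l <= s < h.+2) up s = up l * \prod_(l <= s < h) up s.+1 * up h.+1.
  rewrite big_ltn; last by rewrite ltnS (leqW lh).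
  by rewrite big_add1 big_nat_recr // mulrA.
have dn_split : \prod_(l.-1 <= s < h.+1) dn s = dn l.-1 * \prod_(l <= s < h) dn s * dn h.
  rewrite big_ltn; last by rewrite prednK // (leqW lh).
  by rewrite prednK // big_nat_recr // mulrA.
by rewrite invrK big_split up_split dn_split /=; ring.
Qed.

End FileProduct.

Lemma size_sigma (T : Type) (x0 : T) k (w : seq T) : (0 < k < size w)%N ->
  size (sigma x0 k w) = size w.
Proof. by move=> k_in; rewrite /sigma !size_cat size_takel ?size_drop /=; lia. Qed.

Lemma nth_sigma (T : Type) (x0 : T) k (w : seq T) i : (0 < k < size w)%N ->
  nth x0 (sigma x0 k w) i = nth x0 w (if i == k.-1 then k else if i == k then k.-1 else i).
Proof.
move=> k_in; rewrite /sigma nth_cat size_takel; last lia.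
case: ltnP => [lt_i | le_i]; first by rewrite nth_take // !ifN_eq //; lia.
rewrite nth_cat /=; case: ltnP => [lt_i2 | le_i2]; last first.
  by rewrite nth_drop !ifN_eq; [congr nth; lia | lia | lia].
have [->|->] : i = k.-1 \/ i = k by lia.
  by rewrite subnn eqxx.
have -> : (k - k.-1 = 1)%N by lia.
by rewrite eqxx ifN_eq //; lia.
Qed.

Section QuotientSequence.
Variables (R : realFieldType) (a b : nat).
Implicit Types f g : elt a b -> R.

Lemma size_Qseq g : size (Qseq g) = n a b.
Proof. by rewrite size_map size_iota. Qed.

Lemma nth_Qseq g i : (i < n a b)%N -> nth 0 (Qseq g) i = qk g i.+1.
Proof. by move=> lt_in; rewrite (nth_map 0%N) ?size_iota // nth_iota // add1n. Qed.

Lemma pk_gt0 g j : (forall x, 0 < g x) -> 0 < pk g j.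
Proof. by move=> g_gt0; rewrite /pk; case: ifP => _; [apply: prodr_gt0 | apply: ltr01]. Qed.

Lemma pk_tau_file_other f k j : j != k -> pk (tau_file k f) j = pk f j.
Proof.
move=> ne_jk; rewrite /pk; case: ifP => // _.
apply: eq_bigr => x jx; rewrite tau_fileE ifF //.
by move: jx; rewrite /infile => /eqP ->; apply/negbTE.
Qed.

Lemma qk_tau_file_other f k j : j != k -> j.-1 != k -> qk (tau_file k f) j = qk f j.
Proof. by move=> ne_jk ne_j1k; rewrite /qk !pk_tau_file_other. Qed.

End QuotientSequence.

Theorem lemma6 (R : realFieldType) (a b : nat) (ha : (1 <= a)%N) (hb : (1 <= b)%N)
  (f : 'I_a * 'I_b -> R) (hf : forall x, 0 < f x)
  (k : nat) (hk1 : (1 <= k)%N) (hk2 : (k <= n a b - 1)%N) :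
  Qseq (tau_file k f) = sigma 0 k (Qseq f).
Proof.
have k_in : (0 < k < n a b)%N by rewrite /n in hk2 *; lia.
have pk_neq0 j : pk f j != 0 by rewrite lt0r_neq0 ?pk_gt0.
have pk_tau : pk (tau_file k f) k = pk f k.-1 * pk f k.+1 / pk f k.
  by rewrite -pk_tau_file_mul // mulfK.
apply: (@eq_from_nth _ 0) => [|i]; first by rewrite size_sigma ?size_Qseq.
rewrite size_Qseq => lt_in; rewrite nth_sigma ?size_Qseq // nth_Qseq //.
case: eqP => [-> | ne_ik1]; [|case: eqP => [-> | ne_ik]].
- rewrite nth_Qseq 1?prednK //; last by case/andP: k_in.
  rewrite /qk pk_tau pk_tau_file_other ?prednK //; last lia.
  by field; rewrite !pk_neq0.
- rewrite nth_Qseq ?prednK //; last lia.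
  rewrite /qk /= pk_tau pk_tau_file_other; last lia.
  by field; rewrite !pk_neq0.
- by rewrite nth_Qseq // qk_tau_file_other //; apply/eqP; lia.
Qed.
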